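(* Assume $C$ satisfies (A1), (A2) and (A3). Then there exist $c>0$ depending only on $N_0,\kappa_2$, and $\Theta_2\ge1$ depending on $\kappa_1,\kappa_2,N_0,d,\alpha$, such that for all $\rho>0$, $\lambda>0$ and all $f\in L^2(\rho^{-1}\mathbb Z^d,\rho^{-d}\mu)$, $$\mathcal E^{\rho,\lambda}_\alpha(f,f)\le c\,\mathcal E^{\rho,\lambda\Theta_2}(f,f),\qquad\text{and in particular}\qquad \mathcal E^{\rho}_\alpha(f,f)\le c\,\mathcal E^{\rho}(f,f).$$
   Context: Fix $d\ge1$, $\alpha\in(0,2)$; $\mu$ counting measure. $C:\mathbb Z^d\times\mathbb Z^d\to[0,\infty)$ with: (A1) $C(x,y)=C(y,x)$, $C(x,x)=0$. (A2) $C(x,y)\le\kappa_1|x-y|^{-d-\alpha}$ for $x\ne y$. (A3) There are $N_0\in\mathbb N,\kappa_2>0$ such that for $x\ne y$ in $\mathbb Z^d$ there are $z_0^{(x,y)}=x,\dots,z_l^{(x,y)}=y$, $l\le N_0$, with $C(z_i^{(x,y)},z_{i+1}^{(x,y)})\ge\kappa_2|x-y|^{-d-\alpha}$; and for every $(\zeta,\xi)$ at most $N_0$ pairs $(x,y)$ have $\zeta=z_k^{(x,y)},\xi=z_{k+1}^{(x,y)}$ for some $k$. For $\rho>0$ set $C^\rho(x,y)=\rho^{d+\alpha}C(\rho x,\rho y)$ on $\rho^{-1}\mathbb Z^d$, and $\mathcal E^{\rho,\lambda}(f,f)=\frac12\sum_{x,y\in\rho^{-1}\mathbb Z^d,|x-y|\le\lambda}(f(x)-f(y))^2C^\rho(x,y)\rho^{-2d}$,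 $\mathcal E^{\rho,\lambda}_\alpha(f,f)=\frac12\sum_{x,y\in\rho^{-1}\mathbb Z^d,|x-y|\le\lambda,x\ne y}(f(x)-f(y))^2|x-y|^{-d-\alpha}\rho^{-2d}$, and $\mathcal E^\rho,\mathcal E^\rho_\alpha$ the same sums without the restriction $|x-y|\le\lambda$. *)

From HB Require Import structures.
From mathcomp Require Import all_boot all_order all_algebra.
From mathcomp Require Import all_classical all_reals all_analysis.
Set Implicit Arguments. Unset Strict Implicit. Unset Printing Implicit Defensive.
Import Order.TTheory GRing.Theory Num.Theory.
Local Open Scope classical_set_scope.
Local Open Scope ring_scope.

Section Defs.
Variables (R : realType) (d : nat).

Definition latt := 'rV[int]_d.

Definition enorm (v : 'rV[R]_d) : R := Num.sqrt (\sum_(i < d) v ord0 i ^+ 2).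

Definition emb (rho : R) (z : latt) : 'rV[R]_d := rho^-1 *: map_mx (fun k : int => k%:~R) z.

Definition kern (alpha : R) (v : 'rV[R]_d) : R := enorm v `^ (- (d%:R + alpha)).

Definition qform (rho : R) (P : latt -> latt -> Prop) (K : latt -> latt -> R)
  (f : 'rV[R]_d -> R) : \bar R :=
  ((2^-1)%:E * \esum_(p in [set p : latt * latt | p.1 <> p.2 /\ P p.1 p.2])
     ((f (emb rho p.1) - f (emb rho p.2)) ^+ 2 * K p.1 p.2 * rho ^- (2 * d))%:E)%E.

(* C^rho(x,y) = rho^{d+alpha} C(rho x, rho y), with x = z/rho, y = w/rho *)
Definition Crho (alpha rho : R) (C : latt -> latt -> R) (z w : latt) : R :=
  rho `^ (d%:R + alpha) * C z w.

Definition within (rho lam : R) (z w : latt) : Prop :=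
  enorm (emb rho z - emb rho w) <= lam.

Definition E_rl (alpha rho lam : R) (C : latt -> latt -> R) f :=
  qform rho (within rho lam) (Crho alpha rho C) f.
Definition Ea_rl (alpha rho lam : R) f :=
  qform rho (within rho lam) (fun z w => kern alpha (emb rho z - emb rho w)) f.
Definition E_r (alpha rho : R) (C : latt -> latt -> R) f :=
  qform rho (fun _ _ => True) (Crho alpha rho C) f.
Definition Ea_r (alpha rho : R) f :=
  qform rho (fun _ _ => True) (fun z w => kern alpha (emb rho z - emb rho w)) f.

Definition L2 (rho : R) (f : 'rV[R]_d -> R) : Prop :=
  (\esum_(z in [set: latt]) ((f (emb rho z)) ^+ 2 * rho ^- d)%:E < +oo)%E.

Definition znorm (x y : latt) : R := enorm (map_mx (fun k : int => k%:~R) (x - y)).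

Definition A1 (C : latt -> latt -> R) : Prop :=
  (forall x y, 0 <= C x y) /\ (forall x y, C x y = C y x) /\ (forall x, C x x = 0).

Definition A2 (alpha kappa1 : R) (C : latt -> latt -> R) : Prop :=
  forall x y, x <> y -> C x y <= kappa1 * znorm x y `^ (- (d%:R + alpha)).

Definition uses_edge (p : seq latt) (zeta xi : latt) : Prop :=
  exists k, (k.+1 < size p)%N /\ nth zeta p k = zeta /\ nth zeta p k.+1 = xi.

Definition A3 (alpha : R) (N0 : nat) (kappa2 : R) (C : latt -> latt -> R) : Prop :=
  exists path : latt -> latt -> seq latt,
    (forall x y, x <> y ->
       exists l, (l <= N0)%N /\ size (path x y) = l.+1 /\
         nth x (path x y) 0 = x /\ nth x (path x y) l = y /\
         (forall i, (i < l)%N ->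
            kappa2 * znorm x y `^ (- (d%:R + alpha))
              <= C (nth x (path x y) i) (nth x (path x y) i.+1))) /\
    (forall zeta xi (s : seq (latt * latt)),
       uniq s ->
       (forall q, q \in s -> q.1 <> q.2 /\ uses_edge (path q.1 q.2) zeta xi) ->
       (size s <= N0)%N).

End Defs.

From Pilot Require Import Defs.
From HB Require Import structures.
From mathcomp Require Import all_boot all_order all_algebra.
From mathcomp Require Import all_classical all_reals all_analysis.
From mathcomp Require Import ring.
Set Implicit Arguments. Unset Strict Implicit. Unset Printing Implicit Defensive.
Import Order.TTheory GRing.Theory Num.Theory.
Local Open Scope classical_set_scope.
Local Open Scope ring_scope.

(* Each pair x <> y is joined by the path z^(x,y) of l <= N0 steps, all of
   conductance at least kappa2 |x - y|^(-d-alpha).  Telescoping f along it, some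
   step (z_i, z_(i+1)) has (f x - f y)^2 <= l^2 (f z_i - f z_(i+1))^2, so the
   (x, y) term of E_alpha is at most N0^2 / kappa2 times the (z_i, z_(i+1)) term
   of E.  By (A3) each edge is charged by at most N0 pairs, hence c = N0^3 / kappa2
   (with N0 + 1 for N0, to keep c > 0).  By (A2) the chosen step also has
   |z_i - z_(i+1)| <= (kappa1 / kappa2)^(1/(d+alpha)) |x - y|, which gives Theta2
   for the truncated forms. *)

Definition card_le (T : choiceType) (N : nat) (F : set T) : Prop :=
  forall s : seq T, uniq s -> (forall q, q \in s -> F q) -> (size s <= N)%N.

Section DoubleCounting.
Variable R : realType.

Lemma esum_cst_le_card (T : choiceType) (F : set T) (c : R) (N : nat) :
  0 <= c -> card_le N F -> (\esum_(p in F) c%:E <= (c *+ N)%:E)%E.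
Proof.
move=> c0 FN; apply: ge_ereal_sup => _ [X [finX XF] <-].
rewrite fsbig_finite //= sumEFin lee_fin big_const_seq count_predT iter_addr_0.
apply: ler_wpMn2l => //; apply: FN; first exact: finmap.fset_uniq.
by move=> q; rewrite in_fset_set // inE => /XF.
Qed.

Lemma esumZl_le (T : choiceType) (S : set T) (k : R) (g : T -> R) :
  0 <= k -> (\esum_(e in S) (k * g e)%:E <= k%:E * \esum_(e in S) (g e)%:E)%E.
Proof.
move=> k0; apply: ge_ereal_sup => _ [X [finX XS] <-].
rewrite fsbig_finite //= sumEFin -mulr_sumr EFinM lee_wpmul2l ?lee_fin //.
by apply: ereal_sup_ubound; exists X => //; rewrite fsbig_finite //= sumEFin.
Qed.

Lemma esum_ge_term (T : choiceType) (S : set T) (a : T -> \bar R) (t : T) :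
  (forall x, 0 <= a x)%E -> S t -> (a t <= \esum_(x in S) a x)%E.
Proof.
move=> a0 St; apply: esum_ge; exists [set t]; last by rewrite fsbig_set1.
by split; [exact: finite_set1 | move=> _ ->].
Qed.

Lemma esum_swap (T U : choiceType) (S : set T) (S' : set U) (r : T -> U -> Prop)
    (a : T -> U -> \bar R) :
  (forall p e, 0 <= a p e)%E ->
  (\esum_(p in S) \esum_(e in [set e | S' e /\ r p e]) a p e =
   \esum_(e in S') \esum_(p in [set p | S p /\ r p e]) a p e)%E.
Proof.
move=> a0; rewrite !esum_esum //.
apply: (reindex_esum _ _ (fun z => (z.2, z.1))); split.
- by move=> [e p] [/= S'e [Sp rpe]].
- by move=> [e p] [e' p'] _ _ [-> ->].
- by move=> [p e] [/= Sp [S'e rpe]]; exists (e, p).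
Qed.

Lemma esum_le_bounded_multiplicity (T U : choiceType) (S : set T) (S' : set U)
    (r : T -> U -> Prop) (h : T -> R) (g : U -> R) (k : R) (N : nat) :
  0 <= k -> (forall e, 0 <= g e) ->
  (forall p, S p -> exists2 e, S' e /\ r p e & h p <= k * g e) ->
  (forall e, card_le N [set p | S p /\ r p e]) ->
  (\esum_(p in S) (h p)%:E <= (k * N%:R)%:E * \esum_(e in S') (g e)%:E)%E.
Proof.
move=> k0 g0 hg fibN.
pose r' p e := r p e /\ h p <= k * g e.
have kg0 e : (0 <= (k * g e)%:E)%E by rewrite lee_fin mulr_ge0.
apply: (@le_trans _ _
  (\esum_(p in S) \esum_(e in [set e | S' e /\ r' p e]) (k * g e)%:E)%E).
  apply: le_esum => p /hg [e [S'e rpe] hpe].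
  apply: (@le_trans _ _ (k * g e)%:E); first by rewrite lee_fin.
  exact: esum_ge_term.
rewrite (@esum_swap _ _ _ _ _ (fun _ e => (k * g e)%:E)) //.
apply: (@le_trans _ _ (\esum_(e in S') ((k * N%:R) * g e)%:E)%E); last first.
  exact/esumZl_le/mulr_ge0.
apply: le_esum => e _; rewrite mulrAC mulr_natr.
apply: esum_cst_le_card; first exact: mulr_ge0.
by move=> s us sS; apply: (fibN e s us) => q /sS [Sq []].
Qed.

End DoubleCounting.

Section RealBounds.
Variable R : realType.

Lemma le_scale_of_powRN_le (a b k1 k2 s : R) :
  0 < a -> 0 < b -> 0 < k1 -> 0 < k2 -> 0 < s ->
  k2 * a `^ (- s) <= k1 * b `^ (- s) -> b <= (k1 / k2) `^ s^-1 * a.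
Proof.
move=> a_gt0 b_gt0 k1_gt0 k2_gt0 s_gt0.
rewrite !powRN ler_pdivrMr ?powR_gt0 // mulrAC ler_pdivlMr ?powR_gt0 // => le_k.
have bs_le : b `^ s <= k1 / k2 * a `^ s by rewrite mulrAC ler_pdivlMr // mulrC.
have s_inv_ge0 : 0 <= s^-1 by rewrite invr_ge0 ltW.
have := ge0_ler_powR s_inv_ge0 _ _ bs_le.
have k_ge0 : 0 <= k1 / k2 by rewrite divr_ge0 // ltW.
rewrite !nnegrE powR_ge0 mulr_ge0 ?powR_ge0 // => /(_ isT isT).
rewrite powRM ?powR_ge0 // -!powRrM mulfV ?gt_eqF //.
by rewrite (powRr1 (ltW a_gt0)) (powRr1 (ltW b_gt0)).
Qed.

Lemma exists_large_increment (u : nat -> R) (l : nat) : (0 < l)%N ->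
  exists2 i, (i < l)%N & `|u l - u 0%N| <= l%:R * `|u i.+1 - u i|.
Proof.
move=> l_gt0; apply: contrapT => no_large.
have small i : (i < l)%N -> l%:R * `|u i.+1 - u i| < `|u l - u 0%N|.
  by move=> il; rewrite ltNge; apply/negP => large; apply: no_large; exists i.
have tele : `|u l - u 0%N| <= \sum_(0 <= i < l) `|u i.+1 - u i|.
  by rewrite -(telescope_sumr _ (leq0n l)) ler_norm_sum.
suff : l%:R * `|u l - u 0%N| < l%:R * `|u l - u 0%N| by rewrite ltxx.
apply: le_lt_trans (ler_wpM2l (ler0n _ _) tele) _; rewrite mulr_sumr.
apply: (@lt_le_trans _ _ (\sum_(0 <= i < l) `|u l - u 0%N|)).
  by apply: ltr_sum_nat => // i /andP[_ /small].
by rewrite sumr_const_nat subn0 mulr_natl.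
Qed.

Lemma path_step_dominates (T : Type) (C : T -> T -> R) (u : T -> R)
    (kappa w : R) (N : nat) (p : seq T) (x : T) (l : nat) :
  0 < kappa -> 0 <= w -> (0 < l)%N -> (l <= N)%N ->
  (forall i, (i < l)%N -> kappa * w <= C (nth x p i) (nth x p i.+1)) ->
  exists2 i, (i < l)%N &
    (u (nth x p 0) - u (nth x p l)) ^+ 2 * w <=
    N%:R ^+ 2 / kappa *
      ((u (nth x p i) - u (nth x p i.+1)) ^+ 2 * C (nth x p i) (nth x p i.+1)).
Proof.
move=> kappa_gt0 w_ge0 l_gt0 lN C_ge.
have [i il large] := exists_large_increment (fun i => u (nth x p i)) l_gt0.
exists i => //; set D := u (nth x p 0) - _; set Di := u (nth x p i) - _.
have D2 : D ^+ 2 <= N%:R ^+ 2 * Di ^+ 2.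
  rewrite -[D ^+ 2]real_normK ?num_real // -[Di ^+ 2]real_normK ?num_real //.
  rewrite -exprMn ler_pXn2r ?nnegrE ?mulr_ge0 //.
  move: large => /=; rewrite (distrC (u (nth x p l))) (distrC (u (nth x p i.+1))).
  move/le_trans; apply.
  by rewrite ler_wpM2r // ler_nat.
have w_le : w <= C (nth x p i) (nth x p i.+1) / kappa.
  by rewrite ler_pdivlMr // mulrC; apply: C_ge.
apply: le_trans (ler_wpM2r w_ge0 D2) _.
apply: le_trans (ler_wpM2l _ w_le) _; first by rewrite mulr_ge0 ?sqr_ge0.
by rewrite le_eqVlt; apply/orP; left; apply/eqP; ring.
Qed.

End RealBounds.

Section LatticeGeometry.
Variables (R : realType) (d : nat).

Lemma enorm_ge0 (v : 'rV[R]_d) : 0 <= enorm v.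
Proof. exact: sqrtr_ge0. Qed.

Lemma enormZ (a : R) (v : 'rV[R]_d) : enorm (a *: v) = `|a| * enorm v.
Proof.
rewrite /enorm; under eq_bigr do rewrite mxE exprMn.
by rewrite -mulr_sumr sqrtrM ?sqr_ge0 // sqrtr_sqr.
Qed.

Lemma znorm_ge0 (x y : latt d) : 0 <= znorm R x y.
Proof. exact: enorm_ge0. Qed.

Lemma znorm_gt0 (x y : latt d) : x <> y -> 0 < znorm R x y.
Proof.
move=> /eqP; rewrite -subr_eq0 => /eqP xy_neq0.
have [j xyj_neq0] : exists j : 'I_d, (x - y) ord0 j != 0.
  apply: contrapT => xy0; apply: xy_neq0; apply/matrixP => i j.
  rewrite ord1 [RHS]mxE; apply: contrapT => xyj; apply: xy0; exists j; exact/eqP.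
rewrite /znorm /enorm sqrtr_gt0 (bigD1 j) //=; apply: ltr_wpDr.
  by apply: sumr_ge0 => i _; rewrite sqr_ge0.
by rewrite mxE exprn_even_gt0 // intr_eq0.
Qed.

Lemma enorm_emb_sub (rho : R) (z w : latt d) : 0 < rho ->
  enorm (emb rho z - emb rho w) = rho^-1 * znorm R z w.
Proof.
move=> rho_gt0; have -> : emb rho z - emb rho w =
    rho^-1 *: map_mx (fun k : int => k%:~R) (z - w).
  by apply/matrixP => i j; rewrite !mxE intrB mulrBr.
by rewrite enormZ gtr0_norm ?invr_gt0.
Qed.

Lemma kern_emb_sub (alpha rho : R) (z w : latt d) : 0 < rho ->
  kern alpha (emb rho z - emb rho w) =
  rho `^ (d%:R + alpha) * znorm R z w `^ (- (d%:R + alpha)).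
Proof.
move=> rho_gt0; rewrite /kern enorm_emb_sub // powRM ?znorm_ge0 ?invr_ge0 ?ltW //.
have -> : rho^-1 = rho `^ (-1) by rewrite powRN powRr1 // ltW.
by rewrite -powRrM mulN1r opprK.
Qed.

End LatticeGeometry.

Section PathComparison.
Variables (R : realType) (d N0 : nat) (alpha kappa2 : R).
Hypothesis kappa2_gt0 : 0 < kappa2.

Lemma edge_dominates_pair (C : latt d -> latt d -> R) (u : latt d -> R)
    (p : seq (latt d)) (x y : latt d) (l : nat) :
  (forall z, C z z = 0) -> x <> y ->
  (l <= N0)%N -> size p = l.+1 -> nth x p 0 = x -> nth x p l = y ->
  (forall i, (i < l)%N ->
     kappa2 * znorm R x y `^ (- (d%:R + alpha)) <= C (nth x p i) (nth x p i.+1)) ->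
  exists2 e : latt d * latt d,
    [/\ e.1 <> e.2, uses_edge p e.1 e.2 &
        kappa2 * znorm R x y `^ (- (d%:R + alpha)) <= C e.1 e.2] &
    (u x - u y) ^+ 2 * znorm R x y `^ (- (d%:R + alpha)) <=
      N0.+1%:R ^+ 2 / kappa2 * ((u e.1 - u e.2) ^+ 2 * C e.1 e.2).
Proof.
move=> C_diag xy lN0 size_p p0 pl C_ge.
have l_gt0 : (0 < l)%N.
  by rewrite lt0n; apply/eqP => l0; apply: xy; rewrite -p0 -pl l0.
have [i il] := path_step_dominates u kappa2_gt0 (powR_ge0 _ _) l_gt0 (leqW lN0) C_ge.
rewrite p0 pl => bound; exists (nth x p i, nth x p i.+1) => //=; split => //.
- move=> edge_loop; have := C_ge i il; rewrite edge_loop C_diag.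
  by apply/negP; rewrite -ltNge mulr_gt0 ?powR_gt0 ?znorm_gt0.
- exists i; rewrite size_p; split => //.
  by split; apply: set_nth_default; rewrite size_p // ltnW.
- exact: C_ge.
Qed.

Lemma qform_kern_le_Crho (C : latt d -> latt d -> R) (P Q : latt d -> latt d -> Prop)
    (rho : R) (f : 'rV[R]_d -> R) :
  0 < rho -> A1 C -> A3 alpha N0 kappa2 C ->
  (forall x y z w, x <> y -> P x y -> z <> w ->
     kappa2 * znorm R x y `^ (- (d%:R + alpha)) <= C z w -> Q z w) ->
  (qform rho P (fun z w => kern alpha (emb rho z - emb rho w)) f <=
     ((N0.+1%:R ^+ 2 / kappa2) * N0.+1%:R)%:E * qform rho Q (Crho alpha rho C) f)%E.
Proof.
move=> rho_gt0 [C_ge0 [_ C_diag]] [path [path_ok path_mult]] PQ.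
rewrite /qform muleCA lee_wpmul2l ?lee_fin ?invr_ge0 //.
have m_ge0 : 0 <= rho `^ (d%:R + alpha) / rho ^+ (2 * d).
  by rewrite divr_ge0 ?powR_ge0 ?exprn_ge0 ?ltW.
have le_eq (a b : R) : a = b -> a <= b by move->.
apply: (esum_le_bounded_multiplicity (r := fun q e => uses_edge (path q.1 q.2) e.1 e.2)).
- by rewrite divr_ge0 ?exprn_ge0 ?ltW.
- move=> e; apply: mulr_ge0; last by rewrite invr_ge0 exprn_ge0 // ltW.
  apply: mulr_ge0; first exact: sqr_ge0.
  by apply: mulr_ge0; [exact: powR_ge0 | exact: C_ge0].
- move=> [x y] /= [xy Pxy].
  have [l [lN0 [size_p [p0 [pl C_ge]]]]] := path_ok x y xy.
  have [e [e12 e_used e_ge] bound] :=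
    edge_dominates_pair (f \o emb rho) C_diag xy lN0 size_p p0 pl C_ge.
  exists e; first by split => //; split => //; exact: PQ xy Pxy e12 e_ge.
  rewrite kern_emb_sub // /Crho.
  by apply: le_trans (le_trans (le_eq _ _ _) (ler_wpM2r m_ge0 bound)) (le_eq _ _ _);
    rewrite /comp; ring.
- by move=> e s us s_fibre; apply/leqW/(path_mult e.1 e.2 s us) => q /s_fibre [[]].
Qed.

Lemma edge_within (C : latt d -> latt d -> R) (kappa1 rho lam : R)
    (x y z w : latt d) :
  0 < kappa1 -> 0 < d%:R + alpha -> 0 < rho -> A2 alpha kappa1 C ->
  x <> y -> Defs.within rho lam x y -> z <> w ->
  kappa2 * znorm R x y `^ (- (d%:R + alpha)) <= C z w ->
  Defs.within rho (lam * Num.max 1 ((kappa1 / kappa2) `^ (d%:R + alpha)^-1)) z w.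
Proof.
move=> kappa1_gt0 s_gt0 rho_gt0 A2C xy.
rewrite /Defs.within !enorm_emb_sub // => xy_le zw C_ge.
have zw_le := le_scale_of_powRN_le (znorm_gt0 R xy) (znorm_gt0 R zw)
  kappa1_gt0 kappa2_gt0 s_gt0 (le_trans C_ge (A2C z w zw)).
apply: le_trans (ler_wpM2l _ zw_le) _; first by rewrite invr_ge0 ltW.
rewrite mulrCA mulrC ler_pM ?powR_ge0 //; last by rewrite le_max lexx orbT.
by rewrite mulr_ge0 ?znorm_ge0 // invr_ge0 ltW.
Qed.

End PathComparison.

Unset Implicit Arguments.

Theorem lemma3p1 (R : realType) (N0 : nat) (kappa2 : R) (hk2 : 0 < kappa2) :
  exists c : R, 0 < c /\
  forall (d : nat) (alpha kappa1 : R), (1 <= d)%N -> 0 < alpha -> alpha < 2 ->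
    0 < kappa1 ->
  exists Theta2 : R, 1 <= Theta2 /\
  forall C : latt d -> latt d -> R,
    A1 C -> A2 alpha kappa1 C -> A3 alpha N0 kappa2 C ->
    forall (rho lam : R) (f : 'rV[R]_d -> R), 0 < rho -> 0 < lam -> L2 rho f ->
      (Ea_rl alpha rho lam f <= c%:E * E_rl alpha rho (lam * Theta2) C f)%E /\
      (Ea_r alpha rho f <= c%:E * E_r alpha rho C f)%E.
Proof.
exists (N0.+1%:R ^+ 2 / kappa2 * N0.+1%:R).
split; first by rewrite mulr_gt0 ?divr_gt0 ?exprn_gt0.
move=> d alpha kappa1 _ alpha_gt0 _ kappa1_gt0.
have s_gt0 : 0 < d%:R + alpha by apply: ltr_wpDl.
exists (Num.max 1 ((kappa1 / kappa2) `^ (d%:R + alpha)^-1)).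
split; first by rewrite le_max lexx.
move=> C A1C A2C A3C rho lam f rho_gt0 _ _.
split; last exact: qform_kern_le_Crho.
by apply: qform_kern_le_Crho => // x y z w; apply: edge_within.
Qed.
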